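(* Let $P$ be a finite graded poset of rank $n$ with $\hat0$ and $\hat1$ admitting an $S_n$ EL-labeling, and let $\chi_P$ be the character of the representation of $\mathcal{H}_n(0)$ on $\mathbb{C}\mathcal{M}(P)$ in which $T_i$ acts as $-U_i$. Then $\omega F_P(x)=\mathrm{ch}(\chi_P)$.
   Context: $P$ finite graded of rank $n$ with $\hat0,\hat1$; $\mathcal{M}(P)$ its maximal chains; $\mathrm{rk}$ its rank function, $\mathrm{rk}(x,y)=\mathrm{rk}(y)-\mathrm{rk}(x)$. An $S_n$ EL-labeling is an edge-labeling $\lambda$ of the covering pairs of $P$ such that every interval $[s,t]$ has exactly one maximal chain with weakly increasing labels (bottom to top), whose label sequence is lexicographically smallest among maximal chains of $[s,t]$, and such that the labels $\omega_{\mathfrak m}=(\lambda(x_0,x_1),\dots,\lambda(x_{n-1},x_n))$ along every maximal chain $\mathfrak m:\hat0=x_0<\cdots<x_n=\hat1$ form a permutation of $[n]$. For $i\in[n-1]$, $U_i(\mathfrak m)$ is the unique maximal chain agreeing with $\mathfrak m$ except possibly at rank $i$ and whose label permutation has no descent at $i$; these satisfy the defining relations of $\mathcal{H}_n(0)$ with $T_i=-U_i$ (where $\mathcal{H}_n(0)$ is generated by $T_1,\dots,T_{n-1}$ with $T_i^2=-T_i$, $T_iT_j=T_jT_i$ for $|i-j|\ge2$, $T_iT_{i+1}T_i=T_{i+1}T_iT_{i+1}$). Ehrenborg's flag quasisymmetric function is $F_P(x)=\sum x_1^{\mathrm{rk}(t_0,t_1)}x_2^{\mathrm{rk}(t_1,t_2)}\cdots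 x_k^{\mathrm{rk}(t_{k-1},t_k)}$, summed over all multichains $\hat0=t_0\le t_1\le\cdots\le t_{k-1}<t_k=\hat1$ (all $k\ge1$). For $S\subseteq[n-1]$, Gessel's fundamental quasisymmetric function is $L_{S,n}(x)=\sum x_{i_1}\cdots x_{i_n}$ over $1\le i_1\le\cdots\le i_n$ with $i_j<i_{j+1}$ whenever $j\in S$. The involution $\omega$ on quasisymmetric functions of degree $n$ is the linear map with $\omega(L_{S,n})=L_{[n-1]\setminus S,n}$. For $S\subseteq[n-1]$, $\chi_S$ is the character of the one-dimensional representation of $\mathcal{H}_n(0)$ with $T_i\mapsto -1$ if $i\in S$ and $T_i\mapsto 0$ otherwise; the characteristic is the linear map with $\mathrm{ch}(\chi_S)=L_{S,n}$, extended linearly to characters written as combinations $\sum_S c_S\chi_S$. *)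

From HB Require Import structures.
From mathcomp Require Import all_boot all_order all_algebra all_field.
From mathcomp Require Import mpoly.
Set Implicit Arguments. Unset Strict Implicit. Unset Printing Implicit Defensive.
Import Order.TTheory GRing.Theory Num.Theory.
Local Open Scope order_scope.

Section Poset.
Variables (d : Order.disp_t) (P : finTBPOrderType d).

Definition covers (x y : P) : bool :=
  (x < y) && [forall z : P, ~~ ((x < z) && (z < y))].

Definition graded_rank (rk : P -> nat) (n : nat) : Prop :=
  [/\ rk \bot = 0%N, rk \top = n &
      forall x y : P, covers x y -> rk y = (rk x).+1].

(* maximal chains of [s,t], as s :: c *)
Definition is_mchain (s t : P) (c : seq P) : bool :=
  path covers s c && (last s c == t).

Definition labels (lam : P -> P -> nat) (s : P) (c : seq P) : seq nat :=
  pairmap lam s c.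

Fixpoint lexle (a b : seq nat) : bool :=
  match a, b with
  | [::], _ => true
  | _ :: _, [::] => false
  | x :: a', y :: b' => (x < y)%N || ((x == y) && lexle a' b')
  end.

Definition SnEL (n : nat) (lam : P -> P -> nat) : Prop :=
  (forall s t : P, s <= t ->
     exists c : seq P,
       [/\ is_mchain s t c, sorted leq (labels lam s c),
           (forall c', is_mchain s t c' -> sorted leq (labels lam s c') -> c' = c)
         & (forall c', is_mchain s t c' -> lexle (labels lam s c) (labels lam s c'))])
  /\ (forall c, is_mchain \bot \top c -> perm_eq (labels lam \bot c) (iota 1 n)).

Definition maxchainb (n : nat) (m : n.+1.-tuple P) : bool :=
  [&& tnth m ord0 == \bot, tnth m ord_max == \top &
      [forall j : 'I_n, covers (tnth m (widen_ord (leqnSn n) j)) (tnth m (lift ord0 j))]].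

Definition mchain (n : nat) := {m : n.+1.-tuple P | maxchainb m}.

Definition mlab (n : nat) (lam : P -> P -> nat) (m : mchain n) (j : 'I_n) : nat :=
  lam (tnth (val m) (widen_ord (leqnSn n) j)) (tnth (val m) (lift ord0 j)).

(* Index i : 'I_n.-1 stands for i+1 in [n-1]. *)
Definition agree_except (n : nat) (i : 'I_n.-1) (m m' : mchain n) : bool :=
  [forall j : 'I_n.+1, (val j != i.+1) ==> (tnth (val m) j == tnth (val m') j)].

Definition has_descent (n : nat) (lam : P -> P -> nat) (i : 'I_n.-1) (m : mchain n) : bool :=
  (nth 0 [seq mlab lam m j | j <- enum 'I_n] i >
   nth 0 [seq mlab lam m j | j <- enum 'I_n] i.+1)%N.

(* U_{i+1}(m): the unique maximal chain agreeing with m except possibly at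
   rank i+1 with no descent at i+1 (default m, never used under SnEL). *)
Definition Uop (n : nat) (lam : P -> P -> nat) (i : 'I_n.-1) (m : mchain n) : mchain n :=
  odflt m [pick m' | agree_except i m m' && ~~ has_descent lam i m'].

Local Open Scope ring_scope.

(* Matrix of T_{i+1} = -U_{i+1} on C M(P) (basis indexed via enum_val) *)
Definition Tmx (n : nat) (lam : P -> P -> nat) (i : 'I_n.-1) : 'M[algC]_#|{: mchain n}| :=
  \matrix_(a, b) (if Uop lam i (enum_val b) == enum_val a then -1 else 0).

Definition repW (n : nat) (lam : P -> P -> nat) (w : seq 'I_n.-1) : 'M[algC]_#|{: mchain n}| :=
  foldr (fun i A => Tmx lam i *m A) 1%:M w.

(* Ehrenborg's flag quasisymmetric function, truncated to x_1..x_N *)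
Definition multichainb (k : nat) (t : {ffun 'I_k.+1 -> P}) : bool :=
  [&& t ord0 == \bot, t ord_max == \top,
      [forall j : 'I_k, (t (widen_ord (leqnSn k) j) <= t (lift ord0 j))%O] &
      (t (inord k.-1) < t ord_max)%O].

Definition varidx (N : nat) (k : 'I_N.+1) (j : 'I_k) : 'I_N :=
  Ordinal (leq_trans (ltn_ord j) (ltn_ord k : (k <= N)%N)).

Definition FPtrunc (rk : P -> nat) (N : nat) : {mpoly algC[N]} :=
  \sum_(k < N.+1 | (0 < k)%N)
    \sum_(t : {ffun 'I_k.+1 -> P} | multichainb t)
      \prod_(j < k) ('X_(varidx j) ^+ (rk (t (lift ord0 j)) - rk (t (widen_ord (leqnSn k) j)))%N).

End Poset.

Local Open Scope ring_scope.

(* Gessel's fundamental quasisymmetric function L_{S,n}, truncated to x_1..x_N;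
   S : {set 'I_n.-1}, where i stands for i+1 in [n-1]. *)
Definition Ltrunc (n N : nat) (S : {set 'I_n.-1}) : {mpoly algC[N]} :=
  \sum_(f : {ffun 'I_n -> 'I_N} |
          [forall j : 'I_n, forall j' : 'I_n,
             (val j' == (val j).+1) ==>
             (if [exists i in S, val i == val j] then (f j < f j')%N
              else (f j <= f j')%N)])
    \prod_(j < n) 'X_(f j).

Arguments Ltrunc n N S : clear implicits.

(* chi_S evaluated on T_{w_1}...T_{w_k} *)
Definition chiS (n : nat) (S : {set 'I_n.-1}) (w : seq 'I_n.-1) : algC :=
  \prod_(i <- w) (if i \in S then -1 else 0).

From HB Require Import structures.
From mathcomp Require Import all_boot all_order all_algebra all_field.
From mathcomp Require Import mpoly.
From mathcomp Require Import zify.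
Import Order.TTheory GRing.Theory Num.Theory.
Set Implicit Arguments. Unset Strict Implicit. Unset Printing Implicit Defensive.

(* Both sides are sums over the maximal chains m of P, indexed by the descent set
   Des m of the label permutation of m.  First, F_P = sum_m L_{Des m}: a multichain
   determines a unique pair (m, f) with f weakly increasing along m and strictly
   increasing at the descents of m -- m is the chain through the multichain that is
   ascending on every block (unique by the EL property) and f records the block of
   each rank step.  Second, every T_i is triangular for the weight sum_j j * lambda_j
   of a chain, because U_i either fixes m or trades its descent at i for an ascent,
   which raises the weight; so the trace of T_w is a sum of products of diagonal
   entries, i.e. chi_P = sum_m chi_{[n-1] \ Des m}.  Applying omega to the first
   identity gives the second. *)

Lemma downclosed_count_iota (q : pred nat) k :
  (forall r r', (r' <= r)%N -> (r < k)%N -> q r -> q r') ->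
  forall r, (r < k)%N -> q r = (r < count q (iota 0 k))%N.
Proof.
elim: k => [|k IH] qdown r ltrk //.
rewrite -[k.+1]addn1 iotaD count_cat /= add0n addn0.
have qdown' : forall r r', (r' <= r)%N -> (r < k)%N -> q r -> q r'.
  by move=> a b h1 h2; apply: qdown => //; lia.
case qk: (q k) => /=.
  have -> : count q (iota 0 k) = k.
    rewrite -[in RHS](size_iota 0 k) -count_predT; apply: eq_in_count => x.
    by rewrite mem_iota => /andP[_ ltxk]; apply: (qdown k) => //; lia.
  by rewrite addn1 ltnS in ltrk *; rewrite ltrk; apply: (qdown k) => //; lia.
have := count_size q (iota 0 k); rewrite size_iota addn0 => lecount.
move: ltrk; rewrite ltnS leq_eqVlt => /orP[/eqP ->|ltrk]; first by rewrite qk; lia.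
exact: IH.
Qed.

Lemma count_ltn_iota p k : (p <= k)%N -> count (fun r => r < p)%N (iota 0 k) = p.
Proof.
elim: k p => [|k IH] [|p] lepk //=.
  by rewrite (eq_count (a2 := pred0)) ?count_pred0.
by rewrite (iotaDl 1 0 k) count_map (eq_count (a2 := fun r => (r < p)%N)) ?IH.
Qed.

Lemma sum_fibre_card (V : lmodType algC) (T S : finType) (h : T -> S) (G : S -> V) :
  (\sum_(m : T) G (h m) = \sum_(s : S) (#|[set m | h m == s]|)%:R *: G s)%R.
Proof.
rewrite (partition_big h predT) //=; apply: eq_bigr => s _.
rewrite (eq_bigr (fun _ => G s)); last by move=> m /eqP ->.
have -> : #|[set m | h m == s]| = #|[pred m | h m == s]|.
  by apply: eq_card => m; rewrite inE.
by rewrite scaler_nat -(sumr_const [pred m | h m == s]).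
Qed.

Lemma inordS_eq N (k : 'I_N.+1) x : (0 < k)%N -> (x < N)%N ->
  ((inord x.+1 : 'I_N.+1) == k) = (x == k.-1).
Proof.
move=> k_gt0 ltxN; apply/eqP/eqP => [<- | ->]; first by rewrite inordK.
by apply: val_inj; rewrite /= inordK prednK.
Qed.

Section WeightTriangular.
Local Open Scope ring_scope.
Variables (R : idomainType) (k : nat) (w : 'I_k -> nat).

Definition weight_triangular (A : 'M[R]_k) :=
  forall a b, A a b != 0 -> a = b \/ (w b < w a)%N.

Lemma weight_triangular1 : weight_triangular 1%:M.
Proof. by move=> a b; rewrite mxE; case: (eqVneq a b) => [-> _|_]; [left | rewrite eqxx]. Qed.

Lemma weight_triangularM A B : weight_triangular A -> weight_triangular B ->
  weight_triangular (A *m B).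
Proof.
move=> triA triB a b; rewrite mxE => /eqP nz.
have [c /= | zero] := pickP (fun c => A a c * B c b != 0); last first.
  by case: nz; apply: big1 => c _; apply/eqP/negbFE/zero.
rewrite mulf_eq0 negb_or => /andP[/triA[eqac|ltca] /triB[eqcb|ltbc]]; subst.
- by left.
- by right.
- by right.
by right; apply: ltn_trans ltbc ltca.
Qed.

Lemma weight_triangular_diagM A B a : weight_triangular A -> weight_triangular B ->
  (A *m B) a a = A a a * B a a.
Proof.
move=> triA triB; rewrite mxE (bigD1 a) //= big1 ?addr0 // => c neca.
apply/eqP; rewrite mulf_eq0; apply/norP => -[/triA[eqac|ltca] /triB[eqca|ltac]].
- by rewrite eqac eqxx in neca.
- by rewrite eqac eqxx in neca.
- by rewrite eqca eqxx in neca.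
by have := ltn_trans ltac ltca; rewrite ltnn.
Qed.

End WeightTriangular.

Section MaximalChains.
Variables (d : Order.disp_t) (P : finTBPOrderType d).
Variables (n : nat) (rk : P -> nat) (lam : P -> P -> nat).
Hypothesis n_gt0 : (0 < n)%N.
Hypothesis rkP : graded_rank rk n.
Hypothesis lamEL : SnEL n lam.

Local Open Scope order_scope.

Lemma rk_last_path (x : P) c : path (@covers _ P) x c -> rk (last x c) = (rk x + size c)%N.
Proof.
case: rkP => _ _ rkS.
elim: c x => [|y c IH] x /=; first by rewrite addn0.
by case/andP=> cxy pc; rewrite IH // (rkS _ _ cxy) addSnnS.
Qed.

Lemma le_rk (x y : P) : x <= y -> (rk x <= rk y)%N.
Proof.
move=> lexy; have [c [/andP[pc /eqP <-] _ _ _]] := lamEL.1 x y lexy.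
by rewrite rk_last_path // leq_addr.
Qed.

Lemma lt_rk (x y : P) : x < y -> (rk x < rk y)%N.
Proof.
move=> ltxy; have [c [/andP[pc /eqP lc] _ _ _]] := lamEL.1 x y (ltW ltxy).
case: c pc lc => [_ /= eqxy|z c pc <-]; first by rewrite eqxy ltxx in ltxy.
by rewrite rk_last_path //= addnS ltnS leq_addr.
Qed.

Definition mnth (m : mchain P n) (j : nat) : P := nth \bot (tval (val m)) j.

Lemma mnth_tnth m (j : 'I_n.+1) : tnth (val m) j = mnth m j.
Proof. by rewrite (tnth_nth \bot). Qed.

Lemma mnth0 m : mnth m 0 = \bot.
Proof. by have /and3P[/eqP <- _ _] := valP m; rewrite mnth_tnth. Qed.

Lemma mnth_top m : mnth m n = \top.
Proof. by have /and3P[_ /eqP <- _] := valP m; rewrite mnth_tnth. Qed.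

Lemma covers_mnth m j : (j < n)%N -> covers (mnth m j) (mnth m j.+1).
Proof.
move=> ltjn; have /and3P[_ _ /forallP/(_ (Ordinal ltjn))] := valP m.
by rewrite !mnth_tnth.
Qed.

Lemma rk_mnth m j : (j <= n)%N -> rk (mnth m j) = j.
Proof.
case: rkP => rk0 _ rkS.
elim: j => [|j IH] lejn; first by rewrite mnth0.
by rewrite (rkS _ _ (covers_mnth m lejn)) IH // ltnW.
Qed.

Lemma mnth_le m i j : (i <= j <= n)%N -> mnth m i <= mnth m j.
Proof.
case/andP; elim: j => [|j IH] leij lejn.
  by move: leij; rewrite leqn0 => /eqP ->.
move: leij; rewrite leq_eqVlt => /orP[/eqP -> //|ltij].
apply: le_trans (IH _ (ltnW lejn)) (ltW (andP (covers_mnth m lejn)).1).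
by rewrite -ltnS.
Qed.

Lemma mnth_lt m i j : (i < j <= n)%N -> mnth m i < mnth m j.
Proof.
case/andP=> ltij lejn.
apply: lt_le_trans (andP (covers_mnth m (leq_trans ltij lejn))).1 (mnth_le m _).
by rewrite ltij lejn.
Qed.

Lemma mchain_ext m m' : (forall j, (j <= n)%N -> mnth m j = mnth m' j) -> m = m'.
Proof.
move=> eqm; apply/val_inj/eq_from_tnth => j.
by rewrite !mnth_tnth eqm // -ltnS.
Qed.

Lemma exists_mchain_seq (s : seq P) : size s = n.+1 -> nth \bot s 0 = \bot ->
  nth \bot s n = \top -> (forall j, (j < n)%N -> covers (nth \bot s j) (nth \bot s j.+1)) ->
  exists m : mchain P n, forall j, mnth m j = nth \bot s j.
Proof.
move=> sz s0 sn scov; have sz' : size s == n.+1 by rewrite sz.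
pose t := Tuple sz'.
have mc : maxchainb t.
  apply/and3P; split.
  - by rewrite (tnth_nth \bot) /= s0.
  - by rewrite (tnth_nth \bot) /= sn.
  by apply/forallP => j; rewrite !(tnth_nth \bot) /=; apply: scov.
by exists (exist _ t mc).
Qed.

Definition mlabel m j := lam (mnth m j) (mnth m j.+1).

Lemma mlabE m (j : 'I_n) : mlab lam m j = mlabel m j.
Proof. by rewrite /mlab !mnth_tnth. Qed.

Lemma ord_pred_succ_lt (i : 'I_n.-1) : (i.+1 < n)%N.
Proof. by have := ltn_ord i; move: n_gt0; lia. Qed.

Lemma has_descentE m (i : 'I_n.-1) : has_descent lam i m = (mlabel m i.+1 < mlabel m i)%N.
Proof.
have nth_labels r : (r < n)%N -> nth 0%N [seq mlab lam m j | j <- enum 'I_n] r = mlabel m r.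
  by move=> ltrn; rewrite (nth_map (Ordinal n_gt0)) ?size_enum_ord // mlabE nth_enum_ord.
have ltin := ord_pred_succ_lt i.
by rewrite /has_descent !nth_labels // ltnW.
Qed.

Lemma sum_mlabel m : (\sum_(0 <= j < n) mlabel m j = \sum_(x <- iota 1 n) x)%N.
Proof.
set s := behead (val m).
have ms : tval (val m) = \bot :: s.
  by move: (mnth0 m) (size_tuple (val m)); rewrite /mnth /s; case: (tval _) => //= x s' ->.
have sz : size s = n by rewrite size_behead size_tuple.
have mnthS j : nth \bot s j = mnth m j.+1 by rewrite /mnth ms.
have mc : is_mchain \bot \top s.
  apply/andP; split; last by rewrite (last_nth \bot) -ms sz -(mnth_top m).
  by apply/(pathP \bot) => j ltj; rewrite -ms mnthS; apply: covers_mnth; rewrite -sz.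
have labs : labels lam \bot s = [seq mlabel m j | j <- iota 0 n].
  apply: (@eq_from_nth _ 0%N); first by rewrite size_pairmap size_map size_iota.
  move=> j; rewrite size_pairmap sz => ltjn.
  rewrite (nth_pairmap \bot) ?sz // (nth_map 0%N) ?size_iota // nth_iota // add0n -ms.
  by rewrite mnthS /mlabel /mnth ms.
rewrite [index_iota 0 n]/index_iota subn0 -(big_map _ predT id) -labs.
exact/perm_big/lamEL.2.
Qed.

Definition weight m := (\sum_(0 <= j < n) j * mlabel m j)%N.

Lemma sum_split_at (F : nat -> nat) i : (i.+1 < n)%N ->
  (\sum_(0 <= j < n) F j = \sum_(0 <= j < i) F j + F i + F i.+1 + \sum_(i.+2 <= j < n) F j)%N.
Proof.
move=> ltin; rewrite (@big_cat_nat _ _ _ i) //=; last by lia.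
by rewrite (@big_ltn _ _ _ i n) ?(@big_ltn _ _ _ i.+1 n) ?addnA //; lia.
Qed.

Lemma weight_lt_swap m m' i : (i.+1 < n)%N ->
  (forall j, (j <= n)%N -> j != i.+1 -> mnth m j = mnth m' j) ->
  (mlabel m i.+1 < mlabel m i)%N -> (mlabel m' i <= mlabel m' i.+1)%N ->
  (weight m < weight m')%N.
Proof.
move=> ltin agree desc asc.
have same_label j : (j < n)%N -> j != i -> j != i.+1 -> mlabel m j = mlabel m' j.
  by move=> ltjn neji neji1; rewrite /mlabel !agree //; lia.
have eq_below (F : nat -> nat -> nat) :
    (\sum_(0 <= j < i) F j (mlabel m j) = \sum_(0 <= j < i) F j (mlabel m' j))%N.
  by apply: eq_big_nat => j /andP[_ ltji]; rewrite same_label //; lia.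
have eq_above (F : nat -> nat -> nat) :
    (\sum_(i.+2 <= j < n) F j (mlabel m j) = \sum_(i.+2 <= j < n) F j (mlabel m' j))%N.
  by apply: eq_big_nat => j /andP[leij ltjn]; rewrite same_label //; lia.
have := etrans (sum_mlabel m) (esym (sum_mlabel m')).
rewrite /weight !(sum_split_at _ ltin).
have eb := eq_below (fun _ x => x); have ea := eq_above (fun _ x => x).
cbv beta in eb, ea.
rewrite (eq_below muln) (eq_above muln) eb ea.
move: desc asc; set a := mlabel m i; set b := mlabel m i.+1.
set a' := mlabel m' i; set b' := mlabel m' i.+1 => desc asc sum_eq.
have ltbb' : (b < b')%N by lia.
have : (i * a + i * b = i * a' + i * b')%N by rewrite -!mulnDr; lia.
rewrite !mulSn; lia.
Qed.

Definition ascending_on m a b :=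
  forall r, (a <= r)%N -> (r.+2 <= b)%N -> (mlabel m r <= mlabel m r.+1)%N.

Definition block_ascending k (c : nat -> nat) m :=
  forall J, (J < k)%N -> ascending_on m (c J) (c J.+1).

Lemma segment_mchain m a k : (a + k <= n)%N ->
  let s := [seq mnth m r | r <- iota a.+1 k] in
  [/\ is_mchain (mnth m a) (mnth m (a + k)) s &
      labels lam (mnth m a) s = [seq mlabel m r | r <- iota a k]].
Proof.
rewrite /is_mchain; elim: k a => [|k IH] a leakn /=; first by rewrite addn0 eqxx.
have [|/andP[ps /eqP ls] labs] := IH a.+1; first by lia.
rewrite covers_mnth /=; last by lia.
by rewrite ps ls addSnnS eqxx /labels /= -/(labels _ _ _) labs.
Qed.

Lemma sorted_map_iota (F : nat -> nat) a k :
  (forall r, (a <= r)%N -> (r.+1 < a + k)%N -> (F r <= F r.+1)%N) ->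
  sorted leq [seq F r | r <- iota a k].
Proof.
elim: k a => [|[|k] IH] a Fasc //=.
by rewrite Fasc ?leqnn //=; [apply: IH => r ler ltr; apply: Fasc|]; lia.
Qed.

Lemma ascending_segment_uniq m m' a b : (a <= b <= n)%N ->
  mnth m a = mnth m' a -> mnth m b = mnth m' b ->
  ascending_on m a b -> ascending_on m' a b ->
  forall r, (a <= r <= b)%N -> mnth m r = mnth m' r.
Proof.
move=> leabn ea eb asc asc'; case/andP: (leabn) => leab lebn.
have [c [_ _ c_uniq _]] := lamEL.1 _ _ (mnth_le m leabn).
have segment_eq mm : mnth mm a = mnth m a -> mnth mm b = mnth m b -> ascending_on mm a b ->
    [seq mnth mm r | r <- iota a.+1 (b - a)] = c.
  move=> ema emb ascmm; have [|mc labs] := @segment_mchain mm a (b - a); first by lia.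
  apply: c_uniq; first by move: mc; rewrite subnKC // ema emb.
  by rewrite -ema labs; apply: sorted_map_iota => r ler ltr; apply: ascmm; lia.
have eq_seg := etrans (segment_eq m erefl erefl asc)
                      (esym (segment_eq m' (esym ea) (esym eb) asc')).
move=> r /andP[lear lerb]; case: (eqVneq r a) => [-> //|near].
have := congr1 (nth \bot ^~ (r - a.+1)) eq_seg.
rewrite !(nth_map 0%N) ?size_iota ?nth_iota; try lia.
by rewrite subnKC //; lia.
Qed.

Lemma exists_ascent_swap m i : (i.+1 < n)%N -> exists m',
  (forall j, (j <= n)%N -> j != i.+1 -> mnth m' j = mnth m j) /\
  (mlabel m' i <= mlabel m' i.+1)%N.
Proof.
move=> ltin.
have lein2 : (i <= i.+2 <= n)%N by lia.
have [c [/andP[pc /eqP lc] sc _ _]] := lamEL.1 _ _ (mnth_le m lein2).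
have size2 : size c = 2 by have := rk_last_path pc; rewrite lc !rk_mnth; lia.
case: c pc lc sc size2 => [|y [|z [|]]] //= /and3P[cov_iy cov_yz _] ez /andP[asc _] _.
pose s := set_nth \bot (tval (val m)) i.+1 y.
have s_iS : nth \bot s i.+1 = y by rewrite nth_set_nth /= eqxx.
have s_other j : j != i.+1 -> nth \bot s j = mnth m j.
  by move=> nej; rewrite nth_set_nth /= (negbTE nej).
have [m' m's] : exists m' : mchain P n, forall j, mnth m' j = nth \bot s j.
  apply: exists_mchain_seq.
  - by rewrite size_set_nth size_tuple; apply/maxn_idPr; lia.
  - by rewrite s_other ?mnth0.
  - by rewrite s_other ?mnth_top //; lia.
  move=> j ltjn; case: (eqVneq j i) => [->|neji].
    by rewrite s_iS s_other //; lia.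
  case: (eqVneq j i.+1) => [->|neji1]; first by rewrite s_iS s_other -?ez //; lia.
  by rewrite !s_other ?eqSS //; exact: covers_mnth.
exists m'; split; first by move=> j _ nej; rewrite m's s_other.
by rewrite /mlabel !m's s_iS !s_other -?ez //; lia.
Qed.

Lemma agree_exceptP (i : 'I_n.-1) m m' :
  reflect (forall j, (j <= n)%N -> j != i.+1 -> mnth m j = mnth m' j) (agree_except i m m').
Proof.
apply: (iffP forallP) => [agree j lejn nej | agree j].
  by have /implyP/(_ nej)/eqP := agree (Ordinal (lejn : (j < n.+1)%N)); rewrite !mnth_tnth.
by apply/implyP => nej; rewrite !mnth_tnth agree // -ltnS.
Qed.

Lemma Uop_ascent m (i : 'I_n.-1) : ~~ has_descent lam i m -> Uop lam i m = m.
Proof.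
rewrite has_descentE -leqNgt => asc; have ltin := ord_pred_succ_lt i.
rewrite /Uop; case: pickP => [m' /andP[/agree_exceptP agree asc'] | _] //=.
rewrite has_descentE -leqNgt in asc'.
apply: mchain_ext => j lejn; case: (eqVneq j i.+1) => [->|nej]; last by rewrite agree.
have ascending_i mm : (mlabel mm i <= mlabel mm i.+1)%N -> ascending_on mm i i.+2.
  by move=> ascmm r leir ltr; have -> : r = i by lia.
symmetry; apply: (ascending_segment_uniq (a := i) (b := i.+2)); rewrite ?agree //; try lia.
- exact: ascending_i.
- exact: ascending_i.
Qed.

Lemma Uop_descent m (i : 'I_n.-1) : has_descent lam i m ->
  Uop lam i m != m /\ (weight m < weight (Uop lam i m))%N.
Proof.
move=> desc; have ltin := ord_pred_succ_lt i.
rewrite /Uop; case: pickP => [m' /andP[/agree_exceptP agree asc'] | no_asc] /=.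
  split; first by apply: contraNneq asc' => ->.
  rewrite has_descentE -leqNgt in asc'; rewrite has_descentE in desc.
  exact: (weight_lt_swap ltin agree desc asc').
have [m' [agree asc']] := exists_ascent_swap m ltin.
have agree_m' : agree_except i m m' by apply/agree_exceptP => j lejn nej; rewrite agree.
by have := no_asc m'; rewrite /= agree_m' has_descentE -leqNgt asc'.
Qed.

Lemma Uop_fixedE m (i : 'I_n.-1) : (Uop lam i m == m) = ~~ has_descent lam i m.
Proof.
case desc: (has_descent lam i m); first by have [/negbTE -> _] := Uop_descent desc.
by rewrite Uop_ascent ?desc ?eqxx.
Qed.

Local Open Scope ring_scope.

Lemma weight_triangular_Tmx (i : 'I_n.-1) :
  weight_triangular (fun a => weight (enum_val a)) (Tmx lam i).
Proof.
move=> a b; rewrite mxE; case: ifP => [/eqP eqU _|_]; last by rewrite eqxx.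
case: (eqVneq a b) => [->|neab]; [by left | right].
have desc : has_descent lam i (enum_val b).
  rewrite -[has_descent _ _ _]negbK -Uop_fixedE eqU.
  by apply: contra neab => /eqP /enum_val_inj ->.
by have [_] := Uop_descent desc; rewrite eqU.
Qed.

Lemma repW_triangular (w : seq 'I_n.-1) :
  weight_triangular (fun a => weight (enum_val a)) (repW lam w) /\
  forall a, repW lam w a a = \prod_(i <- w) Tmx lam i a a.
Proof.
elim: w => [|i w [tri diag]] /=.
  by split; [exact: weight_triangular1 | move=> a; rewrite big_nil mxE eqxx].
have triTw := weight_triangularM (@weight_triangular_Tmx i) tri.
split=> //.
by move=> a; rewrite (weight_triangular_diagM _ (@weight_triangular_Tmx i) tri) diag big_cons.
Qed.

Lemma trace_repW (w : seq 'I_n.-1) : \tr (repW lam w) =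
  \sum_(m : mchain P n) \prod_(i <- w) (if has_descent lam i m then 0 else -1).
Proof.
rewrite /mxtrace; under eq_bigr => a _ do rewrite (repW_triangular w).2.
rewrite [RHS](big_enum_val (A := predT)) /=.
apply: eq_bigr => a _; apply: eq_bigr => i _.
by rewrite mxE Uop_fixedE; case: has_descent.
Qed.

Lemma exists_saturated_path (x : P) (ts : seq P) : path <=%O x ts ->
  exists c, [/\ path (@covers _ P) x c, last x c = last x ts & {subset ts <= x :: c}].
Proof.
elim: ts x => [|y ts IH] x /=; first by exists [::].
case/andP=> lexy pts.
have [c1 [/andP[pc1 /eqP lc1] _ _ _]] := lamEL.1 _ _ lexy.
have [c2 [pc2 lc2 sub2]] := IH y pts.
exists (c1 ++ c2); split; first by rewrite cat_path pc1 lc1.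
  by rewrite last_cat lc1.
move=> z; rewrite inE -cat_cons mem_cat => /orP[/eqP ->|/sub2].
  by rewrite -lc1 mem_last.
by rewrite inE -lc1 => /orP[/eqP ->|->]; rewrite ?mem_last ?orbT.
Qed.

Section Multichain.
Variables (k : nat) (t : {ffun 'I_k.+1 -> P}).
Hypothesis t_multichain : multichainb t.

Lemma multichain_ends : [/\ t (inord 0) = \bot, t (inord k) = \top & (t (inord k.-1) < \top)%O].
Proof.
have inord0 : (inord 0 : 'I_k.+1) = ord0 by apply: val_inj; rewrite /= inordK.
have inordk : (inord k : 'I_k.+1) = ord_max by apply: val_inj; rewrite /= inordK.
by case/and4P: t_multichain => /eqP t0 /eqP tk _; rewrite inord0 inordk t0 -tk.
Qed.

Lemma multichain_le j j' : (j <= j' <= k)%N -> (t (inord j) <= t (inord j'))%O.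
Proof.
have /and4P[_ _ /forallP t_step _] := t_multichain.
have tS i : (i < k)%N -> (t (inord i) <= t (inord i.+1))%O.
  move=> ltik; have := t_step (Ordinal ltik).
  by congr (t _ <= t _)%O; apply: val_inj; rewrite /= inordK //; lia.
case/andP; elim: j' => [|j' IH] lejj' lej'k; first by move: lejj'; rewrite leqn0 => /eqP ->.
move: lejj'; rewrite leq_eqVlt => /orP[/eqP -> //|ltjj'].
exact: le_trans (IH ltjj' (ltnW lej'k)) (tS _ lej'k).
Qed.

Definition through m := [forall j : 'I_k.+1, mnth m (rk (t j)) == t j].

Lemma exists_mchain_through : exists m, through m.
Proof.
have [t0 tk _] := multichain_ends.
pose ts := [seq t (inord j) | j <- iota 1 k].
have ts_nth i : (i <= k)%N -> nth \bot (\bot :: ts) i = t (inord i).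
  by case: i => [|i] leik //=; rewrite (nth_map 0%N) ?size_iota // nth_iota.
have pts : path <=%O \bot ts.
  apply/(pathP \bot) => i; rewrite size_map size_iota => ltik.
  rewrite ts_nth; last exact: ltnW.
  rewrite -[nth _ ts i]/(nth \bot (\bot :: ts) i.+1) ts_nth //.
  by apply: multichain_le; rewrite leqnSn.
have [c [pc lc sub]] := exists_saturated_path pts.
have last_ts : last \bot ts = \top by rewrite (last_nth \bot) ts_nth size_map size_iota.
have sz : size c = n.
  by have := rk_last_path pc; rewrite lc last_ts; case: rkP => -> -> _.
have [m mc] : exists m : mchain P n, forall j, mnth m j = nth \bot (\bot :: c) j.
  apply: exists_mchain_seq => //=; first by rewrite sz.
  - by rewrite -sz -last_nth lc last_ts.
  by move=> j ltjn; apply: (pathP \bot pc); rewrite sz.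
exists m; apply/forallP => j; apply/eqP.
have : t j \in \bot :: c.
  rewrite -(inord_val j); case: (posnP j) => [-> | j_gt0]; first by rewrite t0 mem_head.
  by apply: sub; apply: map_f; rewrite mem_iota j_gt0 add1n ltn_ord.
move=> /[dup] tjc; rewrite -index_mem /= => ltidx.
have -> : t j = mnth m (index (t j) (\bot :: c)) by rewrite mc nth_index.
by rewrite rk_mnth // -ltnS -sz.
Qed.

(* Among the chains through [t], one of maximal weight is ascending on every block:
   a descent strictly inside a block could be swapped away, increasing the weight. *)
Lemma max_weight_block_ascending m : through m ->
  (forall m', through m' -> (weight m' <= weight m)%N) ->
  block_ascending k (fun j => rk (t (inord j))) m.
Proof.
move=> thr_m max_m J ltJk r leJr ltrJ; rewrite leqNgt; apply/negP => desc.
have rk_mono j j' : (j <= j' <= k)%N -> (rk (t (inord j)) <= rk (t (inord j')))%N.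
  by move=> /multichain_le; apply: le_rk.
have ltrn : (r.+1 < n)%N.
  have [_ tk _] := multichain_ends; case: rkP => _ rk_top _.
  by have := rk_mono J.+1 k; rewrite tk rk_top; lia.
have [m' [agree asc']] := exists_ascent_swap m ltrn.
have thr_m' : through m'.
  apply/forallP => j; have tj : t j = t (inord j) by rewrite inord_val.
  have lejk : (j <= k)%N by rewrite -ltnS.
  rewrite agree; first exact: (forallP thr_m j).
    have [_ tk _] := multichain_ends; case: rkP => _ <- _.
    by rewrite tj -tk; apply: rk_mono; rewrite lejk leqnn.
  rewrite tj; case: (leqP j J) => [lejJ | ltJj].
    by have := rk_mono j J; rewrite lejJ ltnW //=; lia.
  by have := rk_mono J.+1 j; rewrite ltJj lejk /=; lia.
have := weight_lt_swap ltrn (fun j lejn nej => esym (agree j lejn nej)) desc asc'.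
by have := max_m m' thr_m'; lia.
Qed.

End Multichain.

Definition ordn r : 'I_n := nth (Ordinal n_gt0) (enum 'I_n) r.

Lemma val_ordn r : (r < n)%N -> val (ordn r) = r.
Proof. exact: nth_enum_ord. Qed.

Lemma ordn_val (i : 'I_n) : ordn i = i.
Proof. by apply: val_inj; rewrite val_ordn. Qed.

Lemma count_index_enum (p : pred 'I_n) :
  count p (index_enum 'I_n) = count (fun r => p (ordn r)) (iota 0 n).
Proof.
rewrite -size_filter deprecated_filter_index_enum /enum_mem size_filter -enumT.
by rewrite -val_enum_ord count_map; apply: eq_count => x /=; rewrite ordn_val.
Qed.

Definition descents m : {set 'I_n.-1} := [set i | has_descent lam i m].

Section CompatibleFunctions.
Variable N : nat.

Definition compatible (S : {set 'I_n.-1}) (f : {ffun 'I_n -> 'I_N}) :=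
  [forall j : 'I_n, forall j' : 'I_n,
     (val j' == (val j).+1) ==>
     (if [exists i in S, val i == val j] then (f j < f j')%N else (f j <= f j')%N)].

Lemma LtruncE S : Ltrunc n N S = \sum_(f | compatible S f) \prod_(j < n) 'X_(f j).
Proof. by []. Qed.

Definition fval (f : {ffun 'I_n -> 'I_N}) r := val (f (ordn r)).

Lemma compatible_descentsP m f :
  reflect (forall r, (r.+1 < n)%N -> (fval f r <= fval f r.+1)%N /\
             ((mlabel m r.+1 < mlabel m r)%N -> (fval f r < fval f r.+1)%N))
          (compatible (descents m) f).
Proof.
apply: (iffP forallP) => [compat r ltrn | steps j].
  have /forallP/(_ (ordn r.+1)) := compat (ordn r).
  rewrite (val_ordn ltrn) (val_ordn (ltnW ltrn)) eqxx implyTb.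
  case: ifP => [_ ltf | nodesc lef]; first by split => //; exact: ltnW.
  split=> // desc; case/negP: (negbT nodesc); apply/existsP.
  have ltr : (r < n.-1)%N by lia.
  by exists (Ordinal ltr); rewrite inE has_descentE desc /=.
apply/forallP => j'; apply/implyP => /eqP eqj'.
have ltj : ((val j).+1 < n)%N by rewrite -eqj' ltn_ord.
have [lef ltf] := steps _ ltj.
have fj : fval f j = f j by rewrite /fval ordn_val.
have fj' : fval f (val j).+1 = f j' by rewrite /fval -eqj' ordn_val.
rewrite fj fj' in lef ltf.
case: ifP => // /existsP[i /andP[]]; rewrite inE has_descentE => desc /eqP eqij.
by apply: ltf; rewrite -eqij.
Qed.

Definition fcount (f : {ffun 'I_n -> 'I_N}) j := count (fun r => fval f r < j)%N (iota 0 n).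

Lemma fcount_le f j : (fcount f j <= n)%N.
Proof. by have := count_size (fun r => fval f r < j)%N (iota 0 n); rewrite size_iota. Qed.

Lemma fcount0 f : fcount f 0 = 0%N.
Proof. by rewrite /fcount (eq_count (a2 := pred0)) ?count_pred0. Qed.

Lemma fcount_mono f j j' : (j <= j')%N -> (fcount f j <= fcount f j')%N.
Proof. by move=> lejj'; apply: sub_count => r /= ltr; apply: leq_trans ltr lejj'. Qed.

Lemma count_fval_eq f j :
  count (fun r => fval f r == j) (iota 0 n) = (fcount f j.+1 - fcount f j)%N.
Proof.
have := count_predUI (fun r => fval f r < j)%N (fun r => fval f r == j) (iota 0 n).
rewrite (eq_count (a1 := predI _ _) (a2 := pred0)); last by move=> r /=; case: ltngtP.
rewrite (eq_count (a1 := predU _ _) (a2 := fun r => fval f r < j.+1)%N); last first.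
  by move=> r /=; rewrite ltnS; case: ltngtP.
by rewrite count_pred0 addn0 /fcount => ->; lia.
Qed.

Section Compatible.
Variables (m : mchain P n) (f : {ffun 'I_n -> 'I_N}).
Hypothesis compat : compatible (descents m) f.

Lemma fval_mono r r' : (r <= r')%N -> (r' < n)%N -> (fval f r <= fval f r')%N.
Proof.
elim: r' => [|r' IH] ler ltr'n; first by move: ler; rewrite leqn0 => /eqP ->.
move: ler; rewrite leq_eqVlt => /orP[/eqP -> //|ler].
exact: leq_trans (IH ler (ltnW ltr'n)) ((compatible_descentsP m f compat) _ ltr'n).1.
Qed.

Lemma fval_ltE j r : (r < n)%N -> (fval f r < j)%N = (r < fcount f j)%N.
Proof.
apply: downclosed_count_iota => r1 r2 le21 lt1n ltf.
exact: leq_ltn_trans (fval_mono le21 lt1n) ltf.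
Qed.

Variable k : nat.
Hypothesis fval_last : fval f n.-1 = k.-1.
Hypothesis k_gt0 : (0 < k)%N.

Lemma fval_lt_top r : (r < n)%N -> (fval f r < k)%N.
Proof. by move=> ltrn; have := @fval_mono r n.-1; rewrite fval_last; lia. Qed.

Lemma fcount_top : fcount f k = n.
Proof.
rewrite /fcount -[in RHS](size_iota 0 n) -count_predT.
by apply: eq_in_count => r; rewrite mem_iota => /andP[_ ltrn]; apply: fval_lt_top.
Qed.

Lemma fcount_pred_lt : (fcount f k.-1 < n)%N.
Proof.
have ltn1 : (n.-1 < n)%N by lia.
by have := fval_ltE k.-1 ltn1; rewrite fval_last ltnn => /esym/negbT; lia.
Qed.

End Compatible.

Definition compatible_top k m f := compatible (descents m) f && (fval f n.-1 == k.-1).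

(* The multichain of length [k] cut out of [m] by the level sets of [f]. *)
Definition flag k f m : {ffun 'I_k.+1 -> P} := [ffun j : 'I_k.+1 => mnth m (fcount f j)].

Lemma flagE k f m j : (j <= k)%N -> flag k f m (inord j) = mnth m (fcount f j).
Proof. by move=> lejk; rewrite ffunE inordK. Qed.

Lemma multichainb_flag k m f : (0 < k)%N -> compatible_top k m f -> multichainb (flag k f m).
Proof.
move=> k_gt0 /andP[compat /eqP last_f]; apply/and4P; split.
- by rewrite ffunE /= fcount0 mnth0.
- by rewrite ffunE /= (fcount_top compat last_f k_gt0) mnth_top.
- apply/forallP => j; rewrite !ffunE lift0 /=; apply: mnth_le.
  by rewrite fcount_le andbT fcount_mono.
rewrite !ffunE /= inordK; last by lia.
apply: mnth_lt; rewrite (fcount_top compat last_f k_gt0) leqnn andbT.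
exact (fcount_pred_lt compat last_f k_gt0).
Qed.

Lemma compatible_block_ascending k m f : compatible_top k m f ->
  block_ascending k (fcount f) m.
Proof.
move=> /andP[compat _] J ltJk r leJr ltrJ.
have ltrn : (r.+1 < n)%N by have := fcount_le f J.+1; lia.
have [lef ltf] := (compatible_descentsP m f compat) r ltrn.
have geJ : ~~ (fval f r < J)%N by rewrite (fval_ltE compat J (ltnW ltrn)) -leqNgt.
have leJ : (fval f r.+1 < J.+1)%N by rewrite (fval_ltE compat) //; lia.
by rewrite leqNgt; apply/negP => /ltf; lia.
Qed.

Lemma flag_inj k m f m' f' : (0 < k)%N -> compatible_top k m f -> compatible_top k m' f' ->
  flag k f m = flag k f' m' -> m = m' /\ f = f'.
Proof.
move=> k_gt0 top top' eq_flag.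
have eq_pts j : (j <= k)%N -> mnth m (fcount f j) = mnth m' (fcount f' j).
  by move=> lejk; rewrite -(flagE f m lejk) -(flagE f' m' lejk) eq_flag.
have eq_fcount j : (j <= k)%N -> fcount f j = fcount f' j.
  by move=> lejk; rewrite -(rk_mnth m (fcount_le f j)) eq_pts // rk_mnth // fcount_le.
case/andP: (top) => compat /eqP last_f; case/andP: (top') => compat' /eqP last_f'.
have eq_fval r : (r < n)%N -> fval f r = fval f' r.
  move=> ltrn; have ltk := fval_lt_top compat last_f k_gt0 ltrn.
  have ltk' := fval_lt_top compat' last_f' k_gt0 ltrn.
  apply/eqP; rewrite eqn_leq; apply/andP; split.
    by rewrite -ltnS (fval_ltE compat) // eq_fcount // -(fval_ltE compat').
  by rewrite -ltnS (fval_ltE compat') // -eq_fcount // -(fval_ltE compat).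
have eq_f : f = f'.
  by apply/ffunP => i; apply: val_inj; have := eq_fval i (ltn_ord i); rewrite /fval ordn_val.
split => //; apply: mchain_ext => j; rewrite leq_eqVlt => /orP[/eqP ->|ltjn].
  by rewrite !mnth_top.
set J := fval f j; have ltJk : (J < k)%N by exact (fval_lt_top compat last_f k_gt0 ltjn).
have le1 : (fcount f J <= j)%N by rewrite leqNgt -(fval_ltE compat) // ltnn.
have lt2 : (j < fcount f J.+1)%N by rewrite -(fval_ltE compat) // ltnS.
apply: (ascending_segment_uniq (a := fcount f J) (b := fcount f J.+1)).
- by rewrite fcount_mono // fcount_le.
- by rewrite eq_pts ?eq_fcount //; lia.
- by rewrite eq_pts ?eq_fcount //; lia.
- exact: compatible_block_ascending top J ltJk.
- by rewrite !eq_fcount //; [exact: compatible_block_ascending top' J ltJk | lia].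
by rewrite le1 ltnW.
Qed.

Lemma monomial_flag (k : 'I_N.+1) m f : (0 < k)%N -> compatible_top k m f ->
  \prod_(j < n) 'X_(f j) =
  \prod_(j < k) ('X_(varidx j) ^+ (rk (flag k f m (lift ord0 j)) -
                                   rk (flag k f m (widen_ord (leqnSn k) j)))%N)
  :> {mpoly algC[N]}.
Proof.
move=> k_gt0 /andP[compat /eqP last_f].
have k_le : (k <= N)%N by rewrite -ltnS ltn_ord.
under [RHS]eq_bigr => j _ do rewrite !ffunE /= !rk_mnth ?fcount_le // -count_fval_eq.
rewrite (partition_big (fun r : 'I_n => f r) predT) //=.
under eq_bigr => i _.
  rewrite (eq_bigr (fun _ => 'X_i)); last by move=> r /eqP ->.
  rewrite big_const_seq iter_mulr_1.
  over.
rewrite (bigID (fun i : 'I_N => (i < k)%N)) /= [X in _ * X]big1 ?mulr1; last first.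
  move=> i geik; rewrite count_index_enum (eq_in_count (a2 := pred0)) ?count_pred0 //.
  move=> r; rewrite mem_iota => /andP[_ ltrn] /=; apply/negbTE/eqP => eqfi.
  by have := fval_lt_top compat last_f k_gt0 ltrn; rewrite /fval eqfi (negbTE geik).
rewrite (big_ord_narrow k_le); apply: eq_bigr => j _.
by rewrite count_index_enum; congr ('X__ ^+ _); apply: val_inj.
Qed.

Lemma exists_compatible_of_blocks k (c : nat -> nat) m : (0 < k)%N -> (k <= N)%N ->
  c 0 = 0%N -> c k = n -> (c k.-1 < n)%N ->
  (forall j j', (j <= j' <= k)%N -> (c j <= c j')%N) -> block_ascending k c m ->
  exists f, compatible_top k m f /\ forall j, (j <= k)%N -> fcount f j = c j.
Proof.
move=> k_gt0 lekN c0 ck ck1 cmono asc.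
pose block r := count (fun J => c J.+1 <= r)%N (iota 0 k).
have block_ltE r j : (r < n)%N -> (j <= k)%N -> (block r < j)%N = (r < c j)%N.
  move=> ltrn lejk.
  have endsE J : (J < k)%N -> (c J.+1 <= r)%N = (J < block r)%N.
    apply: downclosed_count_iota => a b leba ltak; apply: leq_trans; apply: cmono; lia.
  case: j lejk => [|j] lejk; first by rewrite c0 ltn0.
  by rewrite ltnS leqNgt -endsE // -ltnNge.
have block_lt r : (r < n)%N -> (block r < k)%N by move=> ltrn; rewrite block_ltE // ck.
have N_gt0 : (0 < N)%N by lia.
pose f := [ffun i : 'I_n => insubd (Ordinal N_gt0) (block i)].
have fvalE r : (r < n)%N -> fval f r = block r.
  move=> ltrn; rewrite /fval ffunE val_ordn // val_insubd.
  by rewrite (leq_trans (block_lt r ltrn) lekN).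
exists f; split; last first.
  move=> j lejk; rewrite /fcount (eq_in_count (a2 := fun r => r < c j)%N).
    by apply: count_ltn_iota; rewrite -ck; apply: cmono; rewrite lejk leqnn.
  by move=> r; rewrite mem_iota => /andP[_ ltrn] /=; rewrite fvalE // block_ltE.
apply/andP; split.
  apply/compatible_descentsP => r ltrn; have ltrn' : (r < n)%N by exact: ltnW.
  rewrite !fvalE //; split; first by apply: sub_count => J /= lecr; apply: leq_trans lecr _.
  move=> desc; rewrite ltnNge; apply/negP => le_block.
  have ltJk := block_lt r ltrn'.
  have le1 : (c (block r) <= r)%N by rewrite leqNgt -block_ltE ?ltnn // ltnW.
  have lt2 : (r.+1 < c (block r).+1)%N by rewrite -block_ltE // ltnS.
  by have := asc _ ltJk r le1 lt2; lia.
have ltn1 : (n.-1 < n)%N by lia.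
rewrite fvalE //; apply/eqP.
have := block_ltE _ k.-1 ltn1 (leq_pred k).
have -> : (n.-1 < c k.-1)%N = false by apply/negbTE; rewrite -leqNgt; lia.
by move/negbT; rewrite -leqNgt; have := block_lt _ ltn1; lia.
Qed.

Lemma flag_surj k t : (0 < k)%N -> (k <= N)%N -> multichainb t ->
  exists m f, compatible_top k m f /\ flag k f m = t.
Proof.
move=> k_gt0 lekN tmc.
have [m0 thr0] := exists_mchain_through tmc.
have [m thr_m max_m] := @arg_maxnP _ m0 (through t) weight thr0.
have [t0 tk tk1] := multichain_ends tmc; case: rkP => rk_bot rk_top _.
have asc := max_weight_block_ascending tmc thr_m max_m.
have [||||f [top fcountE]] := exists_compatible_of_blocks k_gt0 lekN _ _ _ _ asc.
- by rewrite t0 rk_bot.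
- by rewrite tk rk_top.
- by rewrite -rk_top; apply: lt_rk.
- by move=> j j' /(multichain_le tmc)/le_rk.
exists m, f; split => //; apply/ffunP => j; have lejk : (j <= k)%N by rewrite -ltnS.
by rewrite ffunE fcountE // inord_val (eqP (forallP thr_m j)).
Qed.

(* Both sides are sums of monomials; [flag] is a bijection between the pairs (m, f)
   indexing the right-hand side and the multichains indexing [FPtrunc]. *)
Lemma FPtrunc_descents : FPtrunc rk N = \sum_(m : mchain P n) Ltrunc n N (descents m).
Proof.
under [RHS]eq_bigr do rewrite LtruncE; rewrite pair_big_dep /=.
rewrite (partition_big (fun p => inord (fval p.2 n.-1).+1 : 'I_N.+1)
                       (fun k : 'I_N.+1 => (0 < k)%N)) /=; last first.
  by move=> p _; rewrite inordK // ltnS /fval ltn_ord.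
apply: eq_bigr => k k_gt0; have lekN : (k <= N)%N by rewrite -ltnS ltn_ord.
have topE f : (inord (fval f n.-1).+1 == k) = (fval f n.-1 == k.-1).
  by rewrite inordS_eq // /fval ltn_ord.
rewrite (partition_big (fun p => flag k p.2 p.1) (@multichainb _ P k)) /=; last first.
  move=> [m f] /andP[compat eqk]; apply: multichainb_flag => //.
  by rewrite /compatible_top compat -topE.
apply: eq_bigr => t tmc; have [m0 [f0 [top0 flag0]]] := flag_surj k_gt0 lekN tmc.
rewrite (big_pred1 (m0, f0)); first by rewrite (monomial_flag k_gt0 top0) flag0.
move=> [m f] /=; apply/idP/idP => [/andP[/andP[compat eqk] /eqP eqflag] | /eqP[-> ->]].
  have top : compatible_top k m f by rewrite /compatible_top compat -topE.
  by have [-> ->] := flag_inj k_gt0 top top0 (etrans eqflag (esym flag0)).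
by case/andP: (top0) => compat eqk; rewrite compat flag0 eqxx andbT topE.
Qed.

End CompatibleFunctions.
End MaximalChains.

Local Open Scope ring_scope.

Theorem mainTheorem3 (d : Order.disp_t) (P : finTBPOrderType d) (n : nat)
    (rk : P -> nat) (lam : P -> P -> nat) :
  (0 < n)%N ->
  graded_rank rk n ->
  SnEL n lam ->
  exists (dF cP : {set 'I_n.-1} -> algC),
    [/\ (* F_P = sum_S dF_S L_{S,n} *)
        (forall N : nat, FPtrunc rk N = \sum_(S : {set 'I_n.-1}) dF S *: Ltrunc n N S),
        (* chi_P = sum_S cP_S chi_S  (equality of traces on every word T_w) *)
        (forall w : seq 'I_n.-1,
            \tr (repW lam w) = \sum_(S : {set 'I_n.-1}) cP S * chiS S w)
      & (* omega F_P = ch(chi_P) *)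
        (forall N : nat,
            \sum_(S : {set 'I_n.-1}) dF S *: Ltrunc n N (~: S)
            = \sum_(S : {set 'I_n.-1}) cP S *: Ltrunc n N S)].
Proof.
move=> n_gt0 rkP lamEL; set Des := @descents _ P n lam.
exists (fun S => #|[set m | Des m == S]|%:R), (fun S => #|[set m | ~: Des m == S]|%:R).
split=> [N | w | N].
- by rewrite (FPtrunc_descents n_gt0 rkP lamEL) sum_fibre_card.
- rewrite (trace_repW n_gt0 rkP lamEL).
  transitivity (\sum_(m : mchain P n) chiS (~: Des m) w).
    apply: eq_bigr => m _; apply: eq_bigr => i _.
    by rewrite in_setC inE; case: has_descent.
  exact (sum_fibre_card (V := algC^o) (fun m => ~: Des m) (fun S => chiS S w)).
by rewrite -(sum_fibre_card Des (fun S => Ltrunc n N (~: S))) -sum_fibre_card.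
Qed.
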